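(* Let $(V,\mathrm{dist})$ be a metric space and $p_1,\dots,p_n\in V$ (not necessarily distinct). For $t\in[n]$ let $R_t:=\sum_{i=1}^t\mathrm{dist}(p_t,p_i)$ and $Q_t:=\sum_{i=1}^t\sum_{j=1}^t\mathrm{dist}(p_i,p_j)$. For any $t\in[n]$ with $Q_t>0$, $$\frac{2R_t}{Q_t}\ \ge\ \frac{\sum_{i=1}^n\mathrm{dist}(p_t,p_i)}{Q_n}.$$ *)

From HB Require Import structures.
From mathcomp Require Import all_boot all_order all_algebra.
From mathcomp Require Import reals.
Set Implicit Arguments. Unset Strict Implicit. Unset Printing Implicit Defensive.
Import Order.TTheory GRing.Theory Num.Theory.
Local Open Scope ring_scope.

Definition is_metric (R : realType) (V : Type) (dist : V -> V -> R) : Prop :=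
  (forall x y, 0 <= dist x y) /\
  (forall x y, dist x y = 0 <-> x = y) /\
  (forall x y, dist x y = dist y x) /\
  (forall x y z, dist x z <= dist x y + dist y z).

Definition Rsum (R : realType) (V : Type) (dist : V -> V -> R) (p : nat -> V) (t : nat) : R :=
  \sum_(1 <= i < t.+1) dist (p t) (p i).

Definition Qsum (R : realType) (V : Type) (dist : V -> V -> R) (p : nat -> V) (t : nat) : R :=
  \sum_(1 <= i < t.+1) \sum_(1 <= j < t.+1) dist (p i) (p j).

From HB Require Import structures.
From mathcomp Require Import all_boot all_order all_algebra.
From mathcomp Require Import reals.
From mathcomp Require Import lra.
Import Order.TTheory GRing.Theory Num.Theory.
Local Open Scope ring_scope.

(* Write F x for the sum of the distances from x to p_1, ..., p_t.  The
   triangle inequality through x gives Q_t <= 2 t F x, and through the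
   points p_j it gives t dist x y <= F x + F y; together they yield
   dist x y * Q_t <= 4 F x F y.  For x = p_t we have F x = R_t, so each far
   term dist(p_t, p_i), i > t, contributes at most 4 R_t F(p_i) / Q_t, while
   Q_n contains Q_t plus twice the sum of the F(p_i), i > t. *)

Lemma sumr_const_from1 (R : pzSemiRingType) t (c : R) :
  \sum_(1 <= j < t.+1) c = t%:R * c.
Proof. by rewrite sumr_const_nat subn1 mulr_natl. Qed.

Section DistanceSums.

Variables (R : realType) (V : Type) (dist : V -> V -> R).
Hypothesis dist_ge0 : forall x y, 0 <= dist x y.
Hypothesis distC : forall x y, dist x y = dist y x.
Hypothesis dist_triangle : forall x y z, dist x z <= dist x y + dist y z.
Variable p : nat -> V.

Definition dist_sum (t : nat) (x : V) : R := \sum_(1 <= j < t.+1) dist x (p j).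

Lemma dist_sum_ge0 t x : 0 <= dist_sum t x.
Proof. by apply: sumr_ge0 => j _. Qed.

Lemma Qsum_le_dist_sum t x : Qsum dist p t <= 2 * t%:R * dist_sum t x.
Proof.
apply: (@le_trans _ _ (\sum_(1 <= j < t.+1) \sum_(1 <= k < t.+1)
                        (dist x (p j) + dist x (p k)))).
  apply: ler_sum => j _; apply: ler_sum => k _.
  by rewrite (distC x (p j)); apply: dist_triangle.
under eq_bigr do rewrite big_split /= sumr_const_from1.
rewrite big_split /= -mulr_sumr sumr_const_from1 /dist_sum.
lra.
Qed.

Lemma dist_le_dist_sum t x y : t%:R * dist x y <= dist_sum t x + dist_sum t y.
Proof.
rewrite -sumr_const_from1 -big_split /=.
by apply: ler_sum => j _; rewrite (distC y); apply: dist_triangle.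
Qed.

Lemma dist_mul_Qsum_le t x y :
  dist x y * Qsum dist p t <= 4 * dist_sum t x * dist_sum t y.
Proof.
wlog Fxy : x y / dist_sum t x <= dist_sum t y.
  move=> le_xy; have [/le_xy //|/ltW Fyx] := leP (dist_sum t x) (dist_sum t y).
  by rewrite distC mulrAC; apply: le_xy.
have Fx0 := dist_sum_ge0 t x.
have dQ : dist x y * Qsum dist p t <= dist x y * (2 * t%:R * dist_sum t x).
  exact/ler_wpM2l/Qsum_le_dist_sum.
have dF : dist_sum t x * (t%:R * dist x y)
          <= dist_sum t x * (dist_sum t x + dist_sum t y).
  exact/ler_wpM2l/dist_le_dist_sum.
have FF : dist_sum t x * dist_sum t x <= dist_sum t x * dist_sum t y.
  exact: ler_wpM2l.
lra.
Qed.

Lemma Qsum_split_ge t n : (t <= n)%N ->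
  Qsum dist p t + 2 * \sum_(t.+1 <= i < n.+1) dist_sum t (p i) <= Qsum dist p n.
Proof.
move=> tn; set X := \sum_(t.+1 <= i < n.+1) dist_sum t (p i).
have split_row i : \sum_(1 <= j < n.+1) dist (p i) (p j)
    = dist_sum t (p i) + \sum_(t.+1 <= j < n.+1) dist (p i) (p j).
  exact: big_cat_nat.
have near_near : \sum_(1 <= i < t.+1) dist_sum t (p i) = Qsum dist p t by [].
have near_far : \sum_(1 <= i < t.+1) \sum_(t.+1 <= j < n.+1) dist (p i) (p j) = X.
  rewrite exchange_big_nat; apply: eq_bigr => j _.
  by apply: eq_bigr => i _; apply: distC.
have far_far : X <= \sum_(t.+1 <= i < n.+1) \sum_(1 <= j < n.+1) dist (p i) (p j).
  apply: ler_sum => i _; rewrite split_row lerDl.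
  by apply: sumr_ge0 => j _.
rewrite [Qsum _ _ n]/Qsum (big_cat_nat _ (n := t.+1)) //=.
rewrite [X in _ <= X + _](eq_bigr _ (fun i _ => split_row i)) big_split /=.
rewrite near_near near_far; lra.
Qed.

End DistanceSums.

Arguments dist_sum {R V}.

Theorem lemma3p7 (R : realType) (V : Type) (dist : V -> V -> R)
  (hd : is_metric dist) (n : nat) (p : nat -> V) (t : nat)
  (ht : (1 <= t <= n)%N) (hQ : 0 < Qsum dist p t) :
  (\sum_(1 <= i < n.+1) dist (p t) (p i)) / Qsum dist p n
    <= 2 * Rsum dist p t / Qsum dist p t.
Proof.
have [d_ge0 [_ [dC dtri]]] := hd.
have /andP[_ tn] := ht.
set Rt := Rsum dist p t; set Qt := Qsum dist p t in hQ *.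
set X := \sum_(t.+1 <= i < n.+1) dist_sum dist p t (p i).
have Rt0 : 0 <= Rt by apply: dist_sum_ge0.
have X0 : 0 <= X by apply: sumr_ge0 => i _; apply: dist_sum_ge0.
have far : (\sum_(t.+1 <= i < n.+1) dist (p t) (p i)) * Qt <= 4 * Rt * X.
  rewrite mulr_suml mulr_sumr; apply: ler_sum => i _.
  exact: dist_mul_Qsum_le.
have Qn : Qt + 2 * X <= Qsum dist p n by apply: Qsum_split_ge.
have RtQn : Rt * Qt + Rt * (2 * X) <= Rt * Qsum dist p n.
  by rewrite -mulrDr; apply: ler_wpM2l.
rewrite ler_pdivrMr; last by lra.
have near : \sum_(1 <= i < t.+1) dist (p t) (p i) = Rt by [].
rewrite mulrAC ler_pdivlMr // (big_cat_nat _ (n := t.+1)) //= near mulrDl.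
have RtQt : 0 <= Rt * Qt by apply: mulr_ge0; lra.
lra.
Qed.
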